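(* Let $\{b_n\}_{n\ge1}$ be a sequence of non-zero complex numbers with finite exponent of convergence and genus $p\ge1$, and let $a>0$ be real with $a+b_n\neq0$ for all $n$. Then for every $z\in\mathbb C$, $$\sum_{n=1}^\infty\sum_{j=1}^p\frac{(-1)^j}{j}a^j\Big(\frac{z^j}{(a+b_n)^j}-\frac{(1+z)^j}{b_n^j}+\frac1{b_n^j}\Big)=\sum_{k=1}^pE^p_k(a)z^k,$$ where $E^p_k(a)=\sum_{n=1}^\infty\Big(\frac{(-1)^k}{k}\frac{a^k}{(a+b_n)^k}-\sum_{j=k}^p\frac{(-1)^j}{j}\binom jk\frac{a^j}{b_n^j}\Big)$, all series being convergent.
   Context: For a sequence $\{b_n\}$ of non-zero complex numbers with only accumulation point $\infty$ (ordered by modulus), the exponent of convergence is $\limsup_n\log n/\log|b_n|$ and the genus $p$ is its integer part, i.e. the least integer $p\ge0$ with $\sum_n|b_n|^{-p-1}<\infty$. *)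

From Stdlib Require Import Reals.
From Coquelicot Require Import Coquelicot.
Open Scope R_scope.

(* Sequences are indexed from 0: [b n] stands for the paper's b_{n+1}. *)

Definition admissible_seq (b : nat -> C) : Prop :=
  (forall n, b n <> 0%C) /\
  (forall n, Cmod (b n) <= Cmod (b (S n))) /\
  is_lim_seq (fun n => Cmod (b n)) p_infty.

(* Exponent of convergence: limsup_n log n / log |b_n|  (n starting at 1). *)
Definition exponent_of_convergence (b : nat -> C) : Rbar :=
  LimSup_seq (fun n => ln (INR (S n)) / ln (Cmod (b n))).

Definition finite_exponent (b : nat -> C) : Prop :=
  is_finite (exponent_of_convergence b).

Definition summable_pow (b : nat -> C) (q : nat) : Prop :=
  ex_series (fun n => / (Cmod (b n)) ^ q).

Definition genus_is (b : nat -> C) (p : nat) : Prop :=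
  summable_pow b (S p) /\ forall q, (q < p)%nat -> ~ summable_pow b (S q).

Definition csum (m p : nat) (f : nat -> C) : C := sum_n_m f m p.

Definition coef (a : R) (j : nat) : C := RtoC ((-1) ^ j / INR j * a ^ j).

Definition lhs_term (p : nat) (a : R) (b : nat -> C) (z : C) (n : nat) : C :=
  csum 1 p (fun j => Cmult (coef a j)
     (Cplus (Cminus (Cdiv (pow_n z j) (pow_n (Cplus (RtoC a) (b n)) j))
                    (Cdiv (pow_n (Cplus 1 z) j) (pow_n (b n) j)))
            (Cinv (pow_n (b n) j)))).

Definition E_term (p : nat) (a : R) (b : nat -> C) (k : nat) (n : nat) : C :=
  Cminus (Cdiv (coef a k) (pow_n (Cplus (RtoC a) (b n)) k))
         (csum k p (fun j => Cmult (RtoC (Binomial.C j k))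
                                   (Cdiv (coef a j) (pow_n (b n) j)))).

(* Expanding [(1 + z)^j] binomially and exchanging the two finite sums shows that the
   [n]-th term of the left-hand series is [sum_k e_k(n) z^k], where [e_k(n)] is the [n]-th
   term of the series defining [E^p_k(a)]; so it suffices that each of these converges.
   Since [C(j, k) / j = C(j-1, k-1) / k], the inner sum of [e_k(n)] equals
   [(-1)^k a^k / (k b_n^k)] times the Taylor polynomial of degree [p - k] of
   [(1 + a/b_n)^-k], so [e_k(n)] is that prefactor times the Taylor remainder, which is
   [O(|a/b_n|^(p-k+1))] as soon as [|b_n| >= 2|a|]. Thus [e_k(n) = O(|b_n|^-(p+1))], and
   [sum_n |b_n|^-(p+1)] converges by the definition of the genus. *)

From Stdlib Require Import Reals Factorial Lia Lra ClassicalEpsilon Classical.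
From Coquelicot Require Import Coquelicot.

Local Open Scope C_scope.

(* The generic [sum_n_m] lemmas, instantiated at [C] so that they rewrite
   terms written with [Cplus] and [Cmult]; [Ceq] does the same for [ring]. *)

Ltac Ceq := match goal with |- @eq _ ?x ?y => change (@eq C x y) end.

Ltac to_Cpow := repeat match goal with
  |- context [@pow_n C_Ring ?x ?k] => change (@pow_n C_Ring x k) with (Cpow x k) end.

Lemma Csum_mult_l (c : C) (f : nat -> C) m q :
  sum_n_m (fun k => c * f k) m q = c * sum_n_m f m q.
Proof. exact (@sum_n_m_mult_l C_Ring c f m q). Qed.

Lemma Csum_mult_r (c : C) (f : nat -> C) m q :
  sum_n_m (fun k => f k * c) m q = sum_n_m f m q * c.
Proof. exact (@sum_n_m_mult_r C_Ring c f m q). Qed.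

Lemma Csum_plus (f g : nat -> C) m q :
  sum_n_m (fun k => f k + g k) m q = sum_n_m f m q + sum_n_m g m q.
Proof. exact (@sum_n_m_plus C_AbelianMonoid f g m q). Qed.

Lemma Csum_minus (f g : nat -> C) m q :
  sum_n_m (fun k => f k - g k) m q = sum_n_m f m q - sum_n_m g m q.
Proof.
  transitivity (sum_n_m (fun k => f k + (-1) * g k) m q).
  - apply sum_n_m_ext; intro k; Ceq; ring.
  - rewrite Csum_plus, Csum_mult_l; Ceq; ring.
Qed.

Lemma Csum_n_Sm (f : nat -> C) m q : (m <= S q)%nat ->
  sum_n_m f m (S q) = sum_n_m f m q + f (S q).
Proof. exact (@sum_n_Sm C_AbelianMonoid f m q). Qed.

Lemma Csum_Sn_m (f : nat -> C) m q : (m <= q)%nat ->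
  sum_n_m f m q = f m + sum_n_m f (S m) q.
Proof. exact (@sum_Sn_m C_AbelianMonoid f m q). Qed.

Lemma Csum_zero (f : nat -> C) m q : (q < m)%nat -> sum_n_m f m q = RtoC 0.
Proof. exact (@sum_n_m_zero C_AbelianMonoid f m q). Qed.

Lemma Csum_n_n (f : nat -> C) m : sum_n_m f m m = f m.
Proof. exact (@sum_n_n C_AbelianMonoid f m). Qed.

Lemma sum_n_m_triangle_swap {G : AbelianMonoid} (F : nat -> nat -> G) p :
  sum_n_m (fun j => sum_n_m (fun k => F j k) 1 j) 1 p =
  sum_n_m (fun k => sum_n_m (fun j => F j k) k p) 1 p.
Proof.
  induction p as [|p IHp].
  - rewrite !sum_n_m_zero by lia. reflexivity.
  - rewrite sum_n_Sm, IHp by lia.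
    rewrite (sum_n_m_ext_loc (fun k => sum_n_m (fun j => F j k) k (S p))
      (fun k => plus (sum_n_m (fun j => F j k) k p) (F (S p) k)))
      by (intros; apply sum_n_Sm; lia).
    rewrite sum_n_m_plus, (sum_n_Sm (fun k => sum_n_m _ k p)) by lia.
    rewrite (sum_n_m_zero _ (S p) p), plus_zero_r by lia.
    reflexivity.
Qed.

Lemma is_series_sum_n_m {K : AbsRing} {V : NormedModule K}
    (f : nat -> nat -> V) (l : nat -> V) m q : (m <= q)%nat ->
  (forall k, (m <= k <= q)%nat -> is_series (f k) (l k)) ->
  is_series (fun n => sum_n_m (fun k => f k n) m q) (sum_n_m l m q).
Proof.
  intros Hmq; induction Hmq as [|q Hmq IH]; intros Hl.
  - rewrite sum_n_n. apply (is_series_ext (f m)); [intro n; now rewrite sum_n_n|].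
    apply Hl; lia.
  - rewrite sum_n_Sm by lia.
    apply (is_series_ext (fun n => plus (sum_n_m (fun k => f k n) m q) (f (S q) n))).
    { intro n; rewrite sum_n_Sm by lia; reflexivity. }
    apply is_series_plus; [apply IH; intros; apply Hl|apply Hl]; lia.
Qed.

Lemma Cpow_1_plus (z : C) j :
  Cpow (1 + z) j = sum_n_m (fun k => RtoC (Binomial.C j k) * Cpow z k) 0 j.
Proof.
  induction j as [|j IHj].
  - rewrite Csum_n_n, C_n_0. simpl. Ceq; ring.
  - assert (Hshift : (1 + z) * sum_n_m (fun k => RtoC (Binomial.C j k) * Cpow z k) 0 j =
      sum_n_m (fun k => RtoC (Binomial.C j k) * Cpow z k) 0 j +
      sum_n_m (fun i => RtoC (Binomial.C j (pred i)) * Cpow z i) 1 (S j)).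
    { assert (Hz : sum_n_m (fun i => RtoC (Binomial.C j (pred i)) * Cpow z i) 1 (S j) =
                     z * sum_n_m (fun k => RtoC (Binomial.C j k) * Cpow z k) 0 j).
      { rewrite <- (@sum_n_m_S C_AbelianMonoid), <- Csum_mult_l.
        apply sum_n_m_ext; intro k; simpl pred; rewrite Cpow_S; Ceq; ring. }
      rewrite Hz; Ceq; ring. }
    rewrite Cpow_S, IHj, Hshift.
    rewrite (Csum_Sn_m _ 0 (S j)), (Csum_Sn_m _ 0 j), Csum_n_Sm by lia.
    destruct j as [|j].
    + rewrite !Csum_zero by lia. simpl. rewrite !C_n_0, Csum_n_n, C_n_n. Ceq; ring.
    + rewrite (Csum_n_Sm (fun k => RtoC (Binomial.C (S (S j)) k) * Cpow z k)) by lia.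
      rewrite (sum_n_m_ext_loc (fun k => RtoC (Binomial.C (S (S j)) k) * Cpow z k)
        (fun k => RtoC (Binomial.C (S j) k) * Cpow z k + RtoC (Binomial.C (S j) (pred k)) * Cpow z k)).
      2:{ intros k Hk. destruct k as [|k]; [lia|]. simpl pred.
          rewrite <- (pascal (S j) k) by lia. rewrite RtoC_plus. Ceq; ring. }
      rewrite Csum_plus. simpl pred. rewrite !C_n_0, !C_n_n. Ceq; ring.
Qed.

Lemma lhs_term_eq p a b z n :
  lhs_term p a b z n = csum 1 p (fun k => Cmult (E_term p a b k n) (pow_n z k)).
Proof.
  unfold lhs_term, E_term, csum.
  set (A j := coef a j * (Cpow z j * / Cpow (RtoC a + b n) j)).
  set (B j := coef a j * / Cpow (b n) j).
  set (F j k := RtoC (Binomial.C j k) * B j * Cpow z k).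
  transitivity (sum_n_m (fun j => A j - sum_n_m (fun k => F j k) 1 j) 1 p).
  { apply sum_n_m_ext; intro j. to_Cpow. rewrite Cpow_1_plus, (Csum_Sn_m _ 0 j), C_n_0 by lia.
    assert (HF : sum_n_m (fun k => F j k) 1 j =
                 B j * sum_n_m (fun k => RtoC (Binomial.C j k) * Cpow z k) 1 j).
    { rewrite <- Csum_mult_l. apply sum_n_m_ext; intro k; unfold F; Ceq; ring. }
    rewrite HF. unfold A, B, Cdiv, Cminus. simpl. to_Cpow. Ceq; ring. }
  rewrite Csum_minus, (sum_n_m_triangle_swap F), <- Csum_minus.
  apply sum_n_m_ext; intro k. to_Cpow.
  assert (HF : sum_n_m (fun j => F j k) k p =
    sum_n_m (fun j => Cmult (RtoC (Binomial.C j k)) (Cdiv (coef a j) (pow_n (b n) j))) k p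
      * Cpow z k).
  { rewrite <- Csum_mult_r. apply sum_n_m_ext; intro j; unfold F, B, Cdiv; to_Cpow; Ceq; ring. }
  rewrite HF. unfold A, Cdiv, Cminus. Ceq; ring.
Qed.

(* Truncated Taylor series of [(1 - u)^-(K+1) = sum_m C(K+m, m) u^m]. *)

Definition nbinom_coef (K m : nat) : C := RtoC (Binomial.C (K + m) m).

Fixpoint nbinom_taylor (K N : nat) (u : C) : C :=
  match N with
  | 0 => RtoC 0
  | S N' => nbinom_taylor K N' u + nbinom_coef K N' * Cpow u N'
  end.

Definition nbinom_remainder (K N : nat) (u : C) : C :=
  / Cpow (1 - u) (S K) - nbinom_taylor K N u.

Lemma nbinom_coef_0 K : nbinom_coef K 0 = 1.
Proof. unfold nbinom_coef. rewrite C_n_0. reflexivity. Qed.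

Lemma nbinom_remainder_0 K (u : C) : nbinom_remainder K 0 u = / Cpow (1 - u) (S K).
Proof. unfold nbinom_remainder. simpl. ring. Qed.

Lemma nbinom_taylor_0_S N (u : C) : nbinom_taylor 0 (S N) u = 1 + u * nbinom_taylor 0 N u.
Proof.
  induction N as [|N IHN].
  - simpl. rewrite nbinom_coef_0. ring.
  - change (nbinom_taylor 0 (S (S N)) u) with
      (nbinom_taylor 0 (S N) u + nbinom_coef 0 (S N) * Cpow u (S N)).
    rewrite IHN at 1. simpl nbinom_taylor.
    unfold nbinom_coef. simpl plus. rewrite !C_n_n, Cpow_S. ring.
Qed.

(* Pascal's rule, mirroring [(1-u)^-(K+2) = (1-u)^-(K+1) + u (1-u)^-(K+2)]. *)
Lemma nbinom_taylor_S_S K N (u : C) :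
  nbinom_taylor (S K) (S N) u = nbinom_taylor K (S N) u + u * nbinom_taylor (S K) N u.
Proof.
  induction N as [|N IHN].
  - simpl. rewrite !nbinom_coef_0. ring.
  - change (nbinom_taylor ?K (S (S N)) u) with
      (nbinom_taylor K (S N) u + nbinom_coef K (S N) * Cpow u (S N)).
    rewrite IHN at 1. simpl nbinom_taylor.
    assert (Hpascal : nbinom_coef (S K) (S N) = nbinom_coef K (S N) + nbinom_coef (S K) N).
    { unfold nbinom_coef. rewrite <- RtoC_plus. f_equal.
      replace (S K + N)%nat with (K + S N)%nat by lia.
      replace (S K + S N)%nat with (S (K + S N)) by lia.
      rewrite <- pascal by lia. ring. }
    rewrite Hpascal, Cpow_S. ring.
Qed.

Lemma Cminus_1_neq_0 (u : C) : u <> 1 -> 1 - u <> 0.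
Proof. intros Hu H. apply Hu. replace u with (1 - (1 - u)) by ring. rewrite H. ring. Qed.

Lemma nbinom_remainder_0_S N (u : C) : u <> 1 ->
  nbinom_remainder 0 (S N) u = u * nbinom_remainder 0 N u.
Proof.
  intros Hu. unfold nbinom_remainder. rewrite nbinom_taylor_0_S.
  simpl Cpow. field. now apply Cminus_1_neq_0.
Qed.

Lemma nbinom_remainder_S_S K N (u : C) : u <> 1 ->
  nbinom_remainder (S K) (S N) u = nbinom_remainder K (S N) u + u * nbinom_remainder (S K) N u.
Proof.
  intros Hu. unfold nbinom_remainder. rewrite nbinom_taylor_S_S, !Cpow_S.
  assert (H1 := Cminus_1_neq_0 u Hu).
  field. split; [apply Cpow_nz|]; assumption.
Qed.

Lemma Cmod_inv_Cpow_1_minus_le (u : C) n :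
  Cmod u <= 1/2 -> (Cmod (/ Cpow (1 - u) n) <= 2 ^ n)%R.
Proof.
  intros Hu.
  assert (Hlow : (1/2 <= Cmod (1 - u))%R).
  { assert (H := Cmod_triangle (1 - u) u).
    replace (1 - u + u) with (RtoC 1) in H by ring. rewrite Cmod_1 in H. lra. }
  assert (Hnz : 1 - u <> 0) by (intro H; rewrite H, Cmod_0 in Hlow; lra).
  rewrite Cmod_inv, Cmod_pow, <- pow_inv by (apply Cpow_nz; auto).
  apply pow_incr. split.
  - left. apply Rinv_0_lt_compat. lra.
  - replace 2%R with (/ (1/2))%R by field. apply Rinv_le_contravar; lra.
Qed.

Lemma nbinom_remainder_bound K N : exists M,
  forall u, (Cmod u <= 1/2)%R -> (Cmod (nbinom_remainder K N u) <= M * Cmod u ^ N)%R.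
Proof.
  revert N; induction K as [|K IHK]; intro N; induction N as [|N IHN].
  1, 3: eexists; intros u Hu; rewrite nbinom_remainder_0, pow_O, Rmult_1_r;
    exact (Cmod_inv_Cpow_1_minus_le u _ Hu).
  - destruct IHN as [M HB]. exists M. intros u Hu.
    assert (Hu1 : u <> 1) by (intro H; rewrite H, Cmod_1 in Hu; lra).
    rewrite nbinom_remainder_0_S, Cmod_mult by exact Hu1. simpl pow.
    specialize (HB u Hu). pose proof (Cmod_ge_0 u). nra.
  - destruct IHN as [M2 HB2]. destruct (IHK (S N)) as [M1 HB1].
    exists (M1 + M2)%R. intros u Hu.
    assert (Hu1 : u <> 1) by (intro H; rewrite H, Cmod_1 in Hu; lra).
    rewrite nbinom_remainder_S_S by exact Hu1.
    eapply Rle_trans; [apply Cmod_triangle|]. rewrite Cmod_mult.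
    specialize (HB1 u Hu). specialize (HB2 u Hu). pose proof (Cmod_ge_0 u).
    assert (0 <= Cmod u ^ N)%R by (apply pow_le; auto).
    simpl pow in *. nra.
Qed.

(* From [C(j, k) / j = C(j-1, k-1) / k]. *)
Lemma binomial_coef_shift K m a :
  (Binomial.C (S K + m) (S K) * ((-1) ^ (S K + m) / INR (S K + m) * a ^ (S K + m)) =
   ((-1) ^ S K / INR (S K) * a ^ S K) * Binomial.C (K + m) m * (- a) ^ m)%R.
Proof.
  unfold Binomial.C.
  replace (S K + m - S K)%nat with m by lia. replace (K + m - m)%nat with K by lia.
  replace (S K + m)%nat with (S (K + m)) by lia.
  change (fact (S (K + m))) with (S (K + m) * fact (K + m))%nat.
  change (fact (S K)) with (S K * fact K)%nat.
  rewrite !mult_INR.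
  replace ((- a) ^ m)%R with ((-1) ^ m * a ^ m)%R by (rewrite <- Rpow_mult_distr; f_equal; ring).
  simpl pow. rewrite !pow_add.
  assert (H1 := INR_fact_neq_0 K). assert (H2 := INR_fact_neq_0 m).
  assert (H3 := INR_fact_neq_0 (K + m)).
  assert (H4 : INR (S (K + m)) <> 0%R) by (apply not_0_INR; lia).
  assert (H5 : INR (S K) <> 0%R) by (apply not_0_INR; lia).
  field. repeat split; auto.
Qed.

Lemma binomial_sum_eq_nbinom_taylor K N a (w : C) :
  sum_n_m (fun j => RtoC (Binomial.C j (S K)) * (coef a j * Cpow w j)) (S K) (S K + N) =
  coef a (S K) * Cpow w (S K) * nbinom_taylor K (S N) (- (RtoC a * w)).
Proof.
  assert (Hterm : forall m,
    RtoC (Binomial.C (S K + m) (S K)) * (coef a (S K + m) * Cpow w (S K + m)) =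
    coef a (S K) * Cpow w (S K) * (nbinom_coef K m * Cpow (- (RtoC a * w)) m)).
  { intro m. replace (- (RtoC a * w)) with (RtoC (- a) * w) by (rewrite RtoC_opp; ring).
    rewrite Cpow_mult_l, <- RtoC_pow, Cpow_add_r.
    transitivity (RtoC (Binomial.C (S K + m) (S K) *
                        ((-1) ^ (S K + m) / INR (S K + m) * a ^ (S K + m)))
                  * (Cpow w (S K) * Cpow w m)).
    { unfold coef. rewrite (RtoC_mult (Binomial.C _ _)). ring. }
    rewrite binomial_coef_shift. unfold coef, nbinom_coef. rewrite !RtoC_mult. ring. }
  induction N as [|N IHN].
  - rewrite Nat.add_0_r, Csum_n_n. simpl nbinom_taylor.
    specialize (Hterm 0%nat). rewrite Nat.add_0_r in Hterm. rewrite Hterm. Ceq; ring.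
  - rewrite Nat.add_succ_r, Csum_n_Sm, IHN by lia.
    replace (S (S K + N)) with (S K + S N)%nat by lia.
    rewrite Hterm.
    change (nbinom_taylor K (S (S N)) ?u) with
      (nbinom_taylor K (S N) u + nbinom_coef K (S N) * Cpow u (S N)).
    Ceq; ring.
Qed.

Lemma E_term_eq K N p a (b : nat -> C) n :
  p = (S K + N)%nat -> b n <> 0 -> RtoC a + b n <> 0 ->
  E_term p a b (S K) n =
  coef a (S K) * Cpow (/ b n) (S K) * nbinom_remainder K (S N) (- (RtoC a * / b n)).
Proof.
  intros -> Hb Hab. unfold E_term, csum, nbinom_remainder.
  rewrite (sum_n_m_ext _ (fun j => RtoC (Binomial.C j (S K)) * (coef a j * Cpow (/ b n) j))).
  2:{ intro j. to_Cpow. unfold Cdiv. rewrite Cpow_inv by exact Hb. reflexivity. }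
  rewrite binomial_sum_eq_nbinom_taylor. to_Cpow.
  assert (Hnz : 1 - - (RtoC a * / b n) <> 0).
  { intro H. apply Hab. replace (RtoC a + b n) with (b n * (1 - - (RtoC a * / b n)))
      by (field; exact Hb). rewrite H. ring. }
  assert (Hab' : / (RtoC a + b n) = / b n * / (1 - - (RtoC a * / b n))).
  { field. split; [exact Hb|]. intro H. apply Hab. rewrite <- H. ring. }
  unfold Cdiv. rewrite <- Cpow_inv, Hab', Cpow_mult_l, !Cpow_inv by auto.
  ring.
Qed.

Lemma Cmod_E_term_le K N p a (b : nat -> C) : p = (S K + N)%nat ->
  exists M, forall n, b n <> 0 -> RtoC a + b n <> 0 -> (2 * Rabs a <= Cmod (b n))%R ->
    (Cmod (E_term p a b (S K) n) <= M * / Cmod (b n) ^ S p)%R.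
Proof.
  intros Hp. destruct (nbinom_remainder_bound K (S N)) as [M Hrem].
  exists (Cmod (coef a (S K)) * M * Rabs a ^ S N)%R. intros n Hb Hab Hbig.
  rewrite (E_term_eq K N p a b n Hp Hb Hab).
  set (r := (/ Cmod (b n))%R).
  assert (Hr : (0 < r)%R) by (apply Rinv_0_lt_compat, Cmod_gt_0, Hb).
  assert (Hu : Cmod (- (RtoC a * / b n)) = (Rabs a * r)%R).
  { rewrite Cmod_opp, Cmod_mult, Cmod_inv, Cmod_R by exact Hb. reflexivity. }
  assert (Hsmall : (Rabs a * r <= 1/2)%R).
  { unfold r. apply (Rmult_le_reg_r (Cmod (b n))); [apply Cmod_gt_0, Hb|].
    rewrite Rmult_assoc, Rinv_l by (apply Rgt_not_eq, Cmod_gt_0, Hb). lra. }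
  specialize (Hrem (- (RtoC a * / b n))). rewrite Hu, Rpow_mult_distr in Hrem.
  specialize (Hrem Hsmall).
  rewrite !Cmod_mult, Cmod_pow, Cmod_inv, <- pow_inv by exact Hb. fold r.
  rewrite Hp. replace (S (S K + N)) with (S K + S N)%nat by lia. rewrite pow_add.
  assert (0 <= Cmod (coef a (S K)))%R by apply Cmod_ge_0.
  assert (0 <= r ^ S K)%R by (apply pow_le; lra).
  apply Rle_trans with (Cmod (coef a (S K)) * r ^ S K * (M * (Rabs a ^ S N * r ^ S N)))%R.
  - apply Rmult_le_compat_l; [apply Rmult_le_pos|]; assumption.
  - right. ring.
Qed.

Lemma ex_series_E_term p a (b : nat -> C) k :
  (forall n, b n <> 0) -> is_lim_seq (fun n => Cmod (b n)) p_infty ->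
  (forall n, RtoC a + b n <> 0) -> summable_pow b (S p) ->
  (1 <= k <= p)%nat -> ex_series (E_term p a b k).
Proof.
  intros Hb Hlim Hab Hsum Hk. destruct k as [|K]; [lia|].
  destruct (Cmod_E_term_le K (p - S K) p a b ltac:(lia)) as [M HM].
  apply is_lim_seq_spec in Hlim. destruct (Hlim (2 * Rabs a)%R) as [N0 HN0].
  apply (ex_series_incr_n _ N0).
  apply (@ex_series_le C_AbsRing C_CompleteNormedModule _
           (fun n => M * / Cmod (b (N0 + n)%nat) ^ S p)%R).
  - intro n. apply HM; [apply Hb|apply Hab|]. left. apply HN0. lia.
  - apply (@ex_series_scal_l R_AbsRing R_NormedModule).
    exact (proj1 (ex_series_incr_n (fun n => / Cmod (b n) ^ S p)%R N0) Hsum).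
Qed.

Theorem mainTheorem7 (b : nat -> C) (p : nat) (a : R) :
  admissible_seq b ->
  finite_exponent b ->
  genus_is b p ->
  (1 <= p)%nat ->
  (0 < a)%R ->
  (forall n, Cplus (RtoC a) (b n) <> 0%C) ->
  exists E : nat -> C,
    (forall k, (1 <= k <= p)%nat -> is_series (E_term p a b k) (E k)) /\
    (forall z : C,
       is_series (lhs_term p a b z)
         (csum 1 p (fun k => Cmult (E k) (pow_n z k)))).
Proof.
  (* Only [|b_n| -> oo] and the summability of [|b_n|^-(p+1)] are used; [a > 0] is not. *)
  intros [Hb [_ Hlim]] _ [Hsum _] Hp _ Hab.
  destruct (choice (fun k l => (1 <= k <= p)%nat -> is_series (E_term p a b k) l)) as [E HE].
  { intro k. destruct (classic (1 <= k <= p)%nat) as [Hk|Hk].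
    - destruct (ex_series_E_term p a b k Hb Hlim Hab Hsum Hk) as [l Hl]. now exists l.
    - exists (RtoC 0). now intro. }
  exists E. split; [exact HE|]. intro z.
  apply (is_series_ext _ _ _ (fun n => eq_sym (lhs_term_eq p a b z n))).
  apply (is_series_sum_n_m (fun k n => Cmult (E_term p a b k n) (pow_n z k))); [exact Hp|].
  intros k Hk. rewrite Cmult_comm.
  apply (is_series_ext (fun n => scal (pow_n z k) (E_term p a b k n))).
  { intro n. apply Cmult_comm. }
  exact (@is_series_scal_l C_AbsRing C_NormedModule _ _ _ (HE k Hk)).
Qed.
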